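(* (i) The Max-Egal objective is subject to 1-safe UB-improvement by a manipulator $m^-$ over directed networks. (ii) The At-least-1 objective is subject to 1-safe UB-improvement by a manipulator $m^+$ over undirected networks. Here ''subject to 1-safe UB-improvement'' means: there exist $k$, a network $G$ of the stated type, an agent $m$ and a manipulation $r_m$ of the stated kind such that for every possible network $\overline{G_1}$ of the distance-1 partial network $G_1$ of $m$, \[\max_{P\in O(\overline{G_1}^m)} u(m,P)\ge\max_{P\in O(\overline{G_1})} u(m,P),\] and for at least one possible network $\overline{G_1}$ the inequality is strict.
   Context: Agents $A=\{a_1,\dots,a_n\}$ (finite); the social network $G=\langle A,E\rangle$ is a directed or undirected graph without self-loops; $N(a)$ is the set of (out-)neighbours of $a$. For $C\ni a$, $u(a,C)=|C\cap N(a)|$. For $0<k\le n$, $\Pi_k$ is the set of partitions of $A$ into exactly $k$ nonempty coalitions, and $u(a,P)=u(a,C)$ for the $C\in P$ containing $a$. Objectives: Max-Egal — $O(G)$ is the set of $P\in\Pi_k$ maximizing $\min_{a}u(a,P)$; At-least-1 — $O(G)$ is the set of $P\in\Pi_k$ in which every agent has utility $\ge1$, and if none exists $O(G)=\emptyset$ and all utilities (hence min and max over $O(G)$) are taken as $0$. Manipulator types: $m^-$ removes edges (in directed networks only outgoing edges $(m,a)\in E$); $m^+$ adds edges (in undirected networks any new edge $\{m,a\}$). The manipulator's utility $u(m,P)$ is computed with respect to his true neighbours. Limited information: let $A_0=\{m\}$ and $E_1\subseteq E$ the set of edges with an endpoint in $A_0$; $G_1=(A,E_1)$ is the partial network known to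 $m$ (distance 1); $m$ knows all agents of $A$. A possible network of $G_1$ is $\overline{G_1}=(A,E_1\cup E')$ where no edge of $E'$ has an endpoint in $A_0$. $\overline{G_1}^m$ denotes the result of applying the manipulation $r_m$ (the same added/removed edges at $m$) to $\overline{G_1}$, and $u(m,P)$ there is computed with $m$'s true neighbours. *)

From mathcomp Require Import all_boot.
Set Implicit Arguments. Unset Strict Implicit. Unset Printing Implicit Defensive.

Section Coalitions.
Variable n : nat.
Notation A := 'I_n.
Notation net := {set A * A}.

Definition directed_net (E : net) : bool := [forall a : A, (a, a) \notin E].

(* Undirected network: symmetric edge set (each edge {a,b} stored as both
   (a,b) and (b,a)) without self-loops. *)
Definition undirected_net (E : net) : bool :=
  directed_net E && [forall a : A, forall b : A, ((a, b) \in E) ==> ((b, a) \in E)].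

Definition nbrs (E : net) (a : A) : {set A} := [set b | (a, b) \in E].

Definition uC (E : net) (a : A) (C : {set A}) : nat := #|C :&: nbrs E a|.

Definition uP (E : net) (P : {set {set A}}) (a : A) : nat := uC E a (pblock P a).

Definition Pi (k : nat) : {set {set {set A}}} :=
  [set P : {set {set A}} | partition P [set: A] && (#|P| == k)].

(* min_a u(a,P)  (the default value n is irrelevant since A is nonempty
   whenever 0 < k <= n) *)
Definition minU (E : net) (P : {set {set A}}) : nat :=
  \big[minn/n]_(a : A) uP E P a.

Definition O_egal (k : nat) (E : net) : {set {set {set A}}} :=
  [set P in Pi k | [forall Q in Pi k, minU E Q <= minU E P]].

Definition O_atleast1 (k : nat) (E : net) : {set {set {set A}}} :=
  [set P in Pi k | [forall a : A, 0 < uP E P a]].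

(* max_{P in O} u(m,P) w.r.t. the true network Etrue; 0 if O is empty *)
Definition maxU (Etrue : net) (O : {set {set {set A}}}) (m : A) : nat :=
  \max_(P in O) uP Etrue P m.

Definition E1 (E : net) (m : A) : net := [set e in E | (e.1 == m) || (e.2 == m)].

Definition possible (valid : net -> bool) (E : net) (m : A) (Eb : net) : Prop :=
  valid Eb /\
  exists E' : net, (forall e, e \in E' -> e.1 != m /\ e.2 != m) /\ Eb = E1 E m :|: E'.

Definition safe1_UB_improvement (valid : net -> bool)
    (O : nat -> net -> {set {set {set A}}}) (manip : net -> net)
    (k : nat) (E : net) (m : A) : Prop :=
  (forall Eb, possible valid E m Eb -> maxU E (O k Eb) m <= maxU E (O k (manip Eb)) m)
  /\ (exists Eb, possible valid E m Eb /\ maxU E (O k Eb) m < maxU E (O k (manip Eb)) m).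

Definition add_edges (m : A) (S : {set A}) : net :=
  [set e | ((e.1 == m) && (e.2 \in S)) || ((e.2 == m) && (e.1 \in S))].

End Coalitions.

From mathcomp Require Import all_boot.
Set Implicit Arguments. Unset Strict Implicit. Unset Printing Implicit Defensive.

(* (i) Take agents m, a, b, c with edges m -> a, m -> b, a -> m.  Whatever the
   edges m cannot see, once m deletes both out-edges his reported utility is 0
   in every partition, so the egalitarian minimum is 0 everywhere and every
   2-partition becomes optimal, in particular {{m,a,b},{c}}, which gives m his
   best true utility 2.  This never hurts m, and it strictly helps when the
   hidden part is b <-> c: then {{m,a},{b,c}} has minimum 1, so every optimal
   partition keeps c with b, and keeping a and b with m as well would force the
   grand coalition.
   (ii) With k = 1 the only candidate partition is the grand coalition, and
   adding edges can only make it feasible.  Take agents m, a, c with the edge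
   m - a: if c is isolated in the actual network, no partition is feasible and
   m gets 0, while after m adds the edge m - c the grand coalition is feasible
   and gives m utility 1. *)

Section Objectives.
Variable n : nat.
Implicit Types (E : {set 'I_n * 'I_n}) (P : {set {set 'I_n}}) (B : {set 'I_n}).
Implicit Types (O : {set {set {set 'I_n}}}).

Lemma leq_maxU_subset E O O' m : O \subset O' -> maxU E O m <= maxU E O' m.
Proof.
move=> /subsetP sOO'; apply/bigmax_leqP => P /sOO' PO'; exact: leq_bigmax_cond.
Qed.

Lemma minU_le_uP E P x : minU E P <= uP E P x.
Proof.
rewrite /minU; have : x \in index_enum 'I_n by rewrite mem_index_enum.
elim: (index_enum 'I_n) => // y r IHr; rewrite inE big_cons => /orP[/eqP <-|xr].
  exact: geq_minl.
exact: leq_trans (geq_minr _ _) (IHr xr).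
Qed.

Lemma leq_minU E P v : v <= n -> (forall x, v <= uP E P x) -> v <= minU E P.
Proof.
by move=> vn vP; rewrite /minU; elim/big_ind: _ => // x y vx vy; rewrite leq_min vx vy.
Qed.

Lemma nbrsD E R m : nbrs (E :\: R) m = nbrs E m :\: nbrs R m.
Proof. by apply/setP => y; rewrite !inE. Qed.

Lemma possible_nbrs valid E m Eb : possible valid E m Eb -> nbrs Eb m = nbrs E m.
Proof.
case=> _ [E' [E'm ->]]; apply/setP => y; rewrite !inE /= eqxx andbT.
suff /negbTE -> : (m, y) \notin E' by rewrite orbF.
by apply/negP => /E'm [/eqP].
Qed.

Lemma E1_id E m : (forall e, e \in E -> (e.1 == m) || (e.2 == m)) -> E1 E m = E.
Proof. by move=> Em; apply/setP => e; rewrite inE andb_idr //; apply: Em. Qed.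

Lemma O_egal_nbrs0 k E m : nbrs E m = set0 -> O_egal k E = Pi n k.
Proof.
move=> Nm0; apply/setP => P; rewrite inE andb_idr // => _.
apply/forall_inP => Q _; have := minU_le_uP E Q m.
by rewrite /uP /uC Nm0 setI0 cards0 leqn0 => /eqP ->.
Qed.

Lemma uP_subset_net E E' P x : E \subset E' -> uP E P x <= uP E' P x.
Proof.
move=> /subsetP sEE'; apply/subset_leq_card/setIS/subsetP => y; rewrite !inE.
exact: sEE'.
Qed.

Lemma O_atleast1_subset_net k E E' :
  E \subset E' -> O_atleast1 k E \subset O_atleast1 k E'.
Proof.
move=> sEE'; apply/subsetP => P; rewrite !inE => /andP[-> /forallP uP_gt0] /=.
apply/forallP => x; exact: leq_trans (uP_gt0 x) (uP_subset_net P x sEE').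
Qed.

Lemma O_atleast1_nbrs0 k E x : nbrs E x = set0 -> O_atleast1 k E = set0.
Proof.
move=> Nx0; apply/setP => P; rewrite !inE; apply/negbTE; rewrite negb_and orbC.
by apply/orP; left; apply/forallPn; exists x; rewrite /uP /uC Nx0 setI0 cards0.
Qed.

Lemma uP_grand E x : uP E [set [set: 'I_n]] x = #|nbrs E x|.
Proof. by rewrite /uP /uC (@def_pblock _ _ [set: 'I_n]) ?trivIset1 ?inE ?setTI. Qed.

Lemma grand_Pi1 : 0 < n -> [set [set: 'I_n]] \in Pi n 1.
Proof.
move=> n_gt0; rewrite inE cards1 eqxx andbT /partition cover1 trivIset1 eqxx inE /=.
by rewrite eq_sym; apply/set0Pn; exists (Ordinal n_gt0).
Qed.

Lemma trivIset_bipartition B : trivIset [set B; ~: B].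
Proof.
apply/trivIsetP => C D; rewrite !inE => /orP[]/eqP-> /orP[]/eqP->; rewrite ?eqxx // => _.
  by rewrite -setI_eq0 setICr.
by rewrite -setI_eq0 setIC setICr.
Qed.

Lemma bipartition_Pi B : B != set0 -> B != [set: 'I_n] -> [set B; ~: B] \in Pi n 2.
Proof.
move=> B0 BT; have BC : B != ~: B.
  by apply: contra B0 => /eqP BC; rewrite -(setICr B) -BC setIid.
rewrite inE cards2 BC /partition trivIset_bipartition /cover big_setU1 ?inE //=.
rewrite big_set1 setUCr eqxx negb_or !(eq_sym set0) B0 andbT /=.
by rewrite -setCT (inj_eq (@setC_inj _)).
Qed.

Lemma pblock_bipartition B x : pblock [set B; ~: B] x = if x \in B then B else ~: B.
Proof.
apply: def_pblock; first exact: trivIset_bipartition.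
  by case: ifP; rewrite !inE eqxx ?orbT.
by case: ifP => // /negbT; rewrite inE.
Qed.

Lemma Pi_setT_mem k P : P \in Pi n k -> [set: 'I_n] \in P -> k = 1.
Proof.
rewrite inE => /andP[partP /eqP <-] TP; suff -> : P = [set [set: 'I_n]] by rewrite cards1.
have trP := partition_trivIset partP.
apply/setP => C; rewrite inE; apply/idP/eqP => [CP | -> //].
have /set0Pn [x Cx] := partition_neq0 partP CP.
by rewrite -(def_pblock trP CP Cx) (def_pblock trP TP (in_setT x)).
Qed.

End Objectives.

Definition m4 : 'I_4 := @Ordinal 4 0 isT.
Definition a4 : 'I_4 := @Ordinal 4 1 isT.
Definition b4 : 'I_4 := @Ordinal 4 2 isT.
Definition c4 : 'I_4 := @Ordinal 4 3 isT.
Definition G4 : {set 'I_4 * 'I_4} := [set (m4, a4); (m4, b4); (a4, m4)].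
Definition R4 : {set 'I_4 * 'I_4} := [set (m4, a4); (m4, b4)].
Definition G4bc : {set 'I_4 * 'I_4} := G4 :|: [set (b4, c4); (c4, b4)].

Lemma I4P (x : 'I_4) : [\/ x = m4, x = a4, x = b4 | x = c4].
Proof.
case: x => [[|[|[|[|?]]]] ?] //;
  [constructor 1 | constructor 2 | constructor 3 | constructor 4]; exact: val_inj.
Qed.

Lemma G4bc_possible : possible (@directed_net 4) G4 m4 G4bc.
Proof.
split; first by apply/forallP => x; case: (I4P x) => ->; rewrite !inE.
exists [set (b4, c4); (c4, b4)]; split; first by move=> e; rewrite !inE => /orP[]/eqP->.
by rewrite E1_id // => e; rewrite !inE => /orP[/orP[]|]/eqP->.
Qed.

Lemma O_egal_G4_cut Eb :
  possible (@directed_net 4) G4 m4 Eb -> O_egal 2 (Eb :\: R4) = Pi 4 2.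
Proof.
move=> Eb_possible; apply: O_egal_nbrs0 (m4) _.
rewrite nbrsD (possible_nbrs Eb_possible); apply/setP => y.
by rewrite !inE; case: (I4P y) => ->.
Qed.

Lemma minU_G4bc_split : 1 <= minU G4bc [set [set m4; a4]; ~: [set m4; a4]].
Proof.
apply: leq_minU => // x; rewrite /uP /uC pblock_bipartition; apply/card_gt0P.
case: (I4P x) => ->; [exists a4 | exists m4 | exists c4 | exists b4]; by rewrite !inE.
Qed.

Lemma egal_G4bc_uP_m4_le1 P : P \in O_egal 2 G4bc -> uP G4 P m4 <= 1.
Proof.
rewrite inE => /andP[PiP /forall_inP optP].
have split_Pi : [set [set m4; a4]; ~: [set m4; a4]] \in Pi 4 2.
  by apply: bipartition_Pi; apply/eqP => /setP; [move/(_ m4) | move/(_ c4)]; rewrite !inE.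
have uP_gt0 x : 0 < uP G4bc P x.
  exact: leq_trans (leq_trans minU_G4bc_split (optP _ split_Pi)) (minU_le_uP _ _ x).
have partP : partition P [set: 'I_4] by move: PiP; rewrite inE => /andP[].
have [trP covP] := (partition_trivIset partP, cover_partition partP).
rewrite leqNgt; apply/negP => uPm_gt1.
set B := pblock P m4.
have abB : [set a4; b4] \subset B.
  have nbrs_m4 : nbrs G4 m4 = [set a4; b4].
    by apply/setP => y; rewrite !inE; case: (I4P y) => ->.
  have /eqP <- : B :&: [set a4; b4] == [set a4; b4].
    by rewrite eqEcard subsetIr cards2; move: uPm_gt1; rewrite /uP /uC nbrs_m4.
  exact: subsetIl.
have mB : m4 \in B by rewrite mem_pblock covP.
have aB : a4 \in B by apply: (subsetP abB); rewrite !inE eqxx.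
have bB : b4 \in B by apply: (subsetP abB); rewrite !inE eqxx orbT.
have cB : c4 \in B.
  have nbrs_c4 : nbrs G4bc c4 = [set b4].
    by apply/setP => y; rewrite !inE; case: (I4P y) => ->.
  have /card_gt0P [y] := uP_gt0 c4.
  rewrite /uP /uC nbrs_c4 !inE => /andP[+ /eqP yb]; rewrite yb => bc.
  by rewrite /B -(same_pblock trP bB) (same_pblock trP bc) mem_pblock covP.
have BT : B = [set: 'I_4].
  by apply/setP => x; rewrite inE; case: (I4P x) => ->.
have TP : [set: 'I_4] \in P by rewrite -BT pblock_mem ?covP.
by have := Pi_setT_mem PiP TP.
Qed.

Lemma egal_cut_improvement :
  safe1_UB_improvement (@directed_net 4) (@O_egal 4) (fun Eb => Eb :\: R4) 2 G4 m4.
Proof.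
split=> [Eb Eb_possible|].
  rewrite (O_egal_G4_cut Eb_possible); apply: leq_maxU_subset.
  by apply/subsetP => P; rewrite inE => /andP[].
exists G4bc; split; first exact: G4bc_possible.
rewrite (O_egal_G4_cut G4bc_possible).
have split_Pi : [set [set m4; a4; b4]; ~: [set m4; a4; b4]] \in Pi 4 2.
  by apply: bipartition_Pi; apply/eqP => /setP; [move/(_ m4) | move/(_ c4)]; rewrite !inE.
apply: (@leq_trans 2); first by rewrite ltnS; apply/bigmax_leqP => P /egal_G4bc_uP_m4_le1.
apply: leq_trans (leq_bigmax_cond _ split_Pi).
rewrite /uP /uC pblock_bipartition !inE eqxx /=.
have -> : [set m4; a4; b4] :&: nbrs G4 m4 = [set a4; b4].
  by apply/setP => y; rewrite !inE; case: (I4P y) => ->.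
by rewrite cards2.
Qed.

Definition m3 : 'I_3 := @Ordinal 3 0 isT.
Definition a3 : 'I_3 := @Ordinal 3 1 isT.
Definition c3 : 'I_3 := @Ordinal 3 2 isT.
Definition G3 : {set 'I_3 * 'I_3} := [set (m3, a3); (a3, m3)].

Lemma I3P (x : 'I_3) : [\/ x = m3, x = a3 | x = c3].
Proof.
case: x => [[|[|[|?]]] ?] //;
  [constructor 1 | constructor 2 | constructor 3]; exact: val_inj.
Qed.

Lemma G3_undirected : undirected_net G3.
Proof.
apply/andP; split; apply/forallP => x; first by case: (I3P x) => ->; rewrite !inE.
by apply/forallP => y; case: (I3P x) => ->; case: (I3P y) => ->; rewrite !inE.
Qed.

Lemma atleast1_add_improvement :
  safe1_UB_improvement (@undirected_net 3) (@O_atleast1 3)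
    (fun Eb => Eb :|: add_edges m3 [set c3]) 1 G3 m3.
Proof.
split=> [Eb _|]; first exact/leq_maxU_subset/O_atleast1_subset_net/subsetUl.
exists G3; split.
  split; first exact: G3_undirected.
  exists set0; split=> [e|]; first by rewrite inE.
  by rewrite setU0 E1_id // => e; rewrite !inE => /orP[]/eqP->.
rewrite /maxU (@O_atleast1_nbrs0 _ _ _ c3) ?big_set0; last first.
  by apply/setP => y; rewrite !inE; case: (I3P y) => ->.
have grand_O : [set [set: 'I_3]] \in O_atleast1 1 (G3 :|: add_edges m3 [set c3]).
  rewrite inE grand_Pi1 //=; apply/forallP => x; rewrite uP_grand; apply/card_gt0P.
  by case: (I3P x) => ->; [exists a3 | exists m3 | exists m3]; rewrite !inE.
apply: leq_trans (leq_bigmax_cond _ grand_O).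
by rewrite uP_grand; apply/card_gt0P; exists a3; rewrite !inE.
Qed.

Theorem proposition2 :
  (* (i) Max-Egal, manipulator m^- (removes outgoing edges), directed networks *)
  (exists (n k : nat) (E : {set 'I_n * 'I_n}) (m : 'I_n) (R : {set 'I_n * 'I_n}),
      [/\ 0 < k <= n, directed_net E, R \subset E,
          (forall e, e \in R -> e.1 = m) &
          safe1_UB_improvement (@directed_net n) (@O_egal n)
            (fun Eb => Eb :\: R) k E m])
  /\
  (* (ii) At-least-1, manipulator m^+ (adds new edges {m,a}), undirected networks *)
  (exists (n k : nat) (E : {set 'I_n * 'I_n}) (m : 'I_n) (S : {set 'I_n}),
      [/\ 0 < k <= n, undirected_net E,
          (forall a, a \in S -> a != m /\ (m, a) \notin E) &
          safe1_UB_improvement (@undirected_net n) (@O_atleast1 n)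
            (fun Eb => Eb :|: add_edges m S) k E m]).
Proof.
split.
- exists 4, 2, G4, m4, R4; split=> //; last exact: egal_cut_improvement.
  + by apply/forallP => x; case: (I4P x) => ->; rewrite !inE.
  + by apply/subsetP => e; rewrite !inE => /orP[]/eqP->; rewrite eqxx ?orbT.
  + by move=> e; rewrite !inE => /orP[]/eqP->.
- exists 3, 1, G3, m3, [set c3]; split=> //; last exact: atleast1_add_improvement.
  + exact: G3_undirected.
  + by move=> x; rewrite inE => /eqP ->; rewrite !inE.
Qed.
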